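(* Let $t\ge 4$ and let $K_{t,t}^{-}$ be the graph obtained from the complete bipartite graph $K_{t,t}$ by removing one edge. In a Waiter-Client game, by offering edges of $K_{t,t}^-$ only, Waiter can force a red perfect matching of $K_{t,t}^{-}$ within $t+1$ rounds.
   Context: Waiter-Client game: in each round Waiter offers two free edges of the board, Client colors one of them red and the other becomes blue. *)

From mathcomp Require Import all_boot all_fingroup.
Set Implicit Arguments. Unset Strict Implicit. Unset Printing Implicit Defensive.

(* Vertices of K_{t,t}: left part 'I_t and right part 'I_t.
   An edge {a_i, b_j} is encoded as the pair (i, j) : 'I_t * 'I_t.
   K_{t,t}^- is K_{t,t} with the edge (i0, j0) removed. *)
Definition Kminus_edges (t : nat) (i0 j0 : 'I_t) : {set 'I_t * 'I_t} :=
  [set e | e != (i0, j0)].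

Definition has_red_pm (t : nat) (R : {set 'I_t * 'I_t}) : Prop :=
  exists s : {perm 'I_t}, forall i, (i, s i) \in R.

(* In each round Waiter offers two distinct
   free edges of the board; Client colours one red and the other blue. *)
Fixpoint waiter_wins (t : nat) (i0 j0 : 'I_t) (k : nat)
    (R B : {set 'I_t * 'I_t}) : Prop :=
  has_red_pm R \/
  match k with
  | 0 => False
  | k'.+1 =>
      exists e1 e2 : 'I_t * 'I_t,
        [/\ e1 != e2,
            e1 \in Kminus_edges i0 j0 :\: (R :|: B),
            e2 \in Kminus_edges i0 j0 :\: (R :|: B),
            waiter_wins i0 j0 k' (e1 |: R) (e2 |: B) &
            waiter_wins i0 j0 k' (e2 |: R) (e1 |: B)]
  end.

From mathcomp Require Import all_boot all_fingroup.
Set Implicit Arguments. Unset Strict Implicit. Unset Printing Implicit Defensive.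

(* Waiter first offers two pairs of edges at a left vertex [a <> i0], so that
   [a] gets red edges to two right vertices [x], [y] while only edges at [a]
   are coloured.  From then on he keeps a red matching of all left vertices
   except [a] and a set [U] of unmatched ones, avoiding a set [V] of right
   vertices with [|V| = |U| + 1] and [x, y \in V], all edges between [U] and
   [V] being free.  Offering [l1 r, l2 r] (or [l r1, l r2]) with [r] in [V]
   but not [x], [y] extends the matching whatever Client picks, and once
   [U = {l}] the offer [l x, l y] finishes: [a] takes the other one of [x],
   [y].  Each round shrinks [U], so [2 + (t - 1)] rounds suffice.  The missing
   edge [i0 j0] can no longer be offered once [i0 \notin U] or [j0 \notin V],
   and one extra move of the same kind arranges this while [|U| >= 3]. *)

Lemma update_inj (T : finType) (T' : eqType) (D : {set T}) (g : T -> T') l r :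
  {in D &, injective g} -> {in D, forall i, g i != r} ->
  {in l |: D &, injective [eta g with l |-> r]}.
Proof.
move=> g_inj g_r i j /setU1P[-> | iD] /setU1P[-> | jD] /=; rewrite ?eqxx //.
- case: eqVneq => [-> // | _] r_gj.
  by have := g_r j jD; rewrite -r_gj eqxx.
- case: eqVneq => [-> // | _] gi_r.
  by have := g_r i iD; rewrite gi_r eqxx.
- case: eqVneq => [-> | _]; case: eqVneq => [-> | _] //.
  + by move=> r_gj; have := g_r j jD; rewrite -r_gj eqxx.
  + by move=> gi_r; have := g_r i iD; rewrite gi_r eqxx.
  + exact: g_inj.
Qed.

Lemma update_red (T : finType) (D : {set T}) (R : {set T * T}) (g : T -> T)
    l r :
  {in D, forall i, (i, g i) \in R} ->
  {in l |: D, forall i, (i, [eta g with l |-> r] i) \in (l, r) |: R}.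
Proof.
move=> g_red i /setU1P[-> | iD] /=; first by rewrite eqxx setU11.
by case: eqVneq => [-> | _]; rewrite ?setU11 // setU1r ?g_red.
Qed.

Lemma red_pm_of_injective t (R : {set 'I_t * 'I_t}) (f : 'I_t -> 'I_t) :
  injective f -> (forall i, (i, f i) \in R) -> has_red_pm R.
Proof. by move=> f_inj f_red; exists (perm f_inj) => i; rewrite permE. Qed.

Lemma board_edge t (i0 j0 : 'I_t) R B e :
  e != (i0, j0) -> e \notin R :|: B -> e \in Kminus_edges i0 j0 :\: (R :|: B).
Proof. by move=> ? ?; rewrite in_setD /Kminus_edges inE; apply/andP. Qed.

Lemma wins_red_pm t (i0 j0 : 'I_t) k R B :
  has_red_pm R -> waiter_wins i0 j0 k R B.
Proof. by case: k => [|k] pm; left. Qed.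

Lemma wins_offer t (i0 j0 : 'I_t) k R B e1 e2 :
  e1 != e2 ->
  e1 \in Kminus_edges i0 j0 :\: (R :|: B) ->
  e2 \in Kminus_edges i0 j0 :\: (R :|: B) ->
  waiter_wins i0 j0 k (e1 |: R) (e2 |: B) ->
  waiter_wins i0 j0 k (e2 |: R) (e1 |: B) ->
  waiter_wins i0 j0 k.+1 R B.
Proof. by move=> *; right; exists e1, e2. Qed.

Section Position.

Variables (t : nat) (i0 j0 a x y : 'I_t).
Hypothesis x_neq_y : x != y.

Record position (g : 'I_t -> 'I_t) (U V : {set 'I_t})
    (R B : {set 'I_t * 'I_t}) : Prop := Position {
  card_unmatched : #|V| = #|U|.+1;
  a_notin_U : a \notin U;
  x_in_V : x \in V;
  y_in_V : y \in V;
  ax_red : (a, x) \in R;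
  ay_red : (a, y) \in R;
  matched_inj : {in ~: (a |: U) &, injective g};
  matched_red : {in ~: (a |: U), forall i, (i, g i) \in R};
  matched_notin_V : {in ~: (a |: U), forall i, g i \notin V};
  unmatched_free : {in U & V, forall l r, (l, r) \notin R :|: B}
}.

Lemma card_spare g U V R B :
  position g U V R B -> #|V :\: [set x; y]| = #|U|.-1.
Proof.
case=> cardV _ xV yV *; rewrite cardsD.
have /setIidPr -> : [set x; y] \subset V by rewrite subUset !sub1set xV yV.
by rewrite cards2 x_neq_y cardV subSS subn1.
Qed.

Lemma star_position R B :
  R :|: B \subset [set e | e.1 == a] -> (a, x) \in R -> (a, y) \in R ->
  position id [set~ a] setT R B.
Proof.
move=> /subsetP star ax ay; split; rewrite ?in_setT //.
- by rewrite cardsC1 cardsT card_ord prednK // (leq_ltn_trans _ (ltn_ord a)).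
- by rewrite in_setC1 eqxx.
- by move=> i; rewrite !inE orbN.
- by move=> i; rewrite !inE orbN.
- move=> l r; rewrite in_setC1 => l_a _; apply: contra l_a => /star.
  by rewrite inE.
Qed.

Lemma position_step g U V R B l r e :
  position g U V R B -> l \in U -> r \in V :\: [set x; y] ->
  (e.1 == l) || (e.2 == r) ->
  position [eta g with l |-> r] (U :\ l) (V :\ r) ((l, r) |: R) (e |: B).
Proof.
case=> cardV aU xV yV ax ay g_inj g_red g_V free lU /setDP[rV r_xy] e_at.
have l_a : l != a by apply: contraNneq aU => <-.
have dom : ~: (a |: U :\ l) = l |: ~: (a |: U).
  apply/setP=> i; rewrite !inE.
  by case: (eqVneq i l) => [-> | _] //=; rewrite (negbTE l_a).
have r_x : r != x by apply: contraNneq r_xy => ->; rewrite !inE eqxx.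
have r_y : r != y by apply: contraNneq r_xy => ->; rewrite !inE eqxx orbT.
split.
- by move: cardV; rewrite (cardsD1 l U) (cardsD1 r V) lU rV => -[].
- by rewrite in_setD1 negb_and aU orbT.
- by rewrite in_setD1 eq_sym r_x.
- by rewrite in_setD1 eq_sym r_y.
- exact: setU1r ax.
- exact: setU1r ay.
- rewrite dom; apply: update_inj => // i iD.
  by apply: contraNneq (g_V i iD) => ->.
- by rewrite dom; apply: update_red.
- rewrite dom => i /setU1P[-> | iD] /=; first by rewrite eqxx setD11.
  have i_l : i != l by apply: contraTneq iD => ->; rewrite !inE lU orbT.
  by rewrite (negbTE i_l) in_setD1 negb_and g_V ?orbT.
- move=> l' r' /setD1P[l'_l l'U] /setD1P[r'_r r'V].
  have e_l'r' : (l', r') != e.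
    by case: e e_at => e1 e2 /= /orP[] /eqP ->;
      rewrite xpair_eqE ?(negbTE l'_l) ?(negbTE r'_r) ?andbF.
  have := free l' r' l'U r'V; rewrite !inE !negb_or xpair_eqE.
  by rewrite (negbTE l'_l) e_l'r'.
Qed.

Lemma position_red_pm g l V R B z :
  position g [set l] V R B -> z \in [set x; y] -> has_red_pm ((l, z) |: R).
Proof.
case=> _ _ xV yV ax ay g_inj g_red g_V _ z_xy.
have zV : z \in V by case/set2P: z_xy => ->.
have [w [wV w_z aw]] : exists w, [/\ w \in V, w != z & (a, w) \in R].
  by case/set2P: z_xy => ->; [exists y | exists x]; split; rewrite // eq_sym.
pose f := [eta [eta g with l |-> z] with a |-> w].
have dom i : i \in a |: (l |: ~: (a |: [set l])).
  by rewrite !inE; case: (i == a); case: (i == l).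
apply: (@red_pm_of_injective _ _ f) => [i j | i].
- apply: (update_inj _ _ (dom i) (dom j)).
    apply: update_inj => // i' i'D.
    by apply: contraNneq (g_V i' i'D) => ->.
  move=> i' /setU1P[-> | i'D] /=; first by rewrite eqxx eq_sym.
  by case: ifP => _; [rewrite eq_sym | apply: contraNneq (g_V i' i'D) => ->].
- case/setU1P: (dom i) => [-> | i_dom] /=; first by rewrite eqxx setU1r.
  case: eqVneq => [-> | _]; first by rewrite setU1r.
  exact: update_red g_red _ i_dom.
Qed.

Lemma position_final_wins g l V R B :
  position g [set l] V R B -> (l, x) != (i0, j0) -> (l, y) != (i0, j0) ->
  waiter_wins i0 j0 1 R B.
Proof.
move=> pos lx_ok ly_ok.
apply: (wins_offer (e1 := (l, x)) (e2 := (l, y))).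
- by rewrite xpair_eqE eqxx x_neq_y.
- exact/board_edge/(unmatched_free pos (set11 l) (x_in_V pos)).
- exact/board_edge/(unmatched_free pos (set11 l) (y_in_V pos)).
- by apply/wins_red_pm/(position_red_pm pos); rewrite set21.
- by apply/wins_red_pm/(position_red_pm pos); rewrite set22.
Qed.

Lemma offer_adjacent_wins k g U V R B l1 r1 l2 r2 :
  position g U V R B -> l1 \in U -> l2 \in U ->
  r1 \in V :\: [set x; y] -> r2 \in V :\: [set x; y] ->
  (l1 == l2) || (r1 == r2) -> (l1, r1) != (l2, r2) ->
  (l1, r1) != (i0, j0) -> (l2, r2) != (i0, j0) ->
  (forall g' R' B', position g' (U :\ l1) (V :\ r1) R' B' ->
     waiter_wins i0 j0 k R' B') ->
  (forall g' R' B', position g' (U :\ l2) (V :\ r2) R' B' ->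
     waiter_wins i0 j0 k R' B') ->
  waiter_wins i0 j0 k.+1 R B.
Proof.
move=> pos l1U l2U r1V r2V adj e12 e1_ok e2_ok wins1 wins2.
have [r1V' r2V'] : r1 \in V /\ r2 \in V by case/setDP: r1V; case/setDP: r2V.
apply: (wins_offer e12).
- exact/board_edge/(unmatched_free pos).
- exact/board_edge/(unmatched_free pos).
- by apply: wins1 (position_step pos l1U r1V _); rewrite /= eq_sym (eq_sym r2).
- by apply: wins2 (position_step pos l2U r2V _).
Qed.

Lemma edge_avoids_missing (U V : {set 'I_t}) l r :
  (i0 \notin U) || (j0 \notin V) -> l \in U -> r \in V -> (l, r) != (i0, j0).
Proof.
move=> avoid lU rV; rewrite xpair_eqE.
by apply: contraL avoid => /andP[/eqP <- /eqP <-]; rewrite lU rV.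
Qed.

Lemma position_wins_avoiding n g (U V : {set 'I_t}) R B :
  #|U| = n.+1 -> position g U V R B -> (i0 \notin U) || (j0 \notin V) ->
  waiter_wins i0 j0 n.+1 R B.
Proof.
elim: n g U V R B => [|n IH] g U V R B cardU pos avoid.
  move/eqP/cards1P: cardU => [l U_l]; rewrite U_l in pos avoid.
  by apply: (position_final_wins pos); apply: edge_avoids_missing avoid _ _;
    rewrite ?set11 ?(x_in_V pos) ?(y_in_V pos).
have [l1 [l2 [l1U l2U l12]]] :
    exists l1 l2, [/\ l1 \in U, l2 \in U & l1 != l2].
  by apply/card_gt1P; rewrite cardU.
have [r rV] : exists r, r \in V :\: [set x; y].
  by apply/set0Pn; rewrite -card_gt0 (card_spare pos) cardU.
have rV' : r \in V by case/setDP: rV.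
have wins l : l \in U -> forall g' R' B',
    position g' (U :\ l) (V :\ r) R' B' -> waiter_wins i0 j0 n.+1 R' B'.
  move=> lU g' R' B' /IH; apply.
    by move: cardU; rewrite (cardsD1 l) lU => -[].
  by case/orP: avoid; rewrite !in_setD1 !negb_and => ->; rewrite ?orbT.
apply: (offer_adjacent_wins pos l1U l2U rV rV) (wins _ l1U) (wins _ l2U).
- by rewrite eqxx orbT.
- by rewrite xpair_eqE eqxx andbT.
- exact: edge_avoids_missing avoid l1U rV'.
- exact: edge_avoids_missing avoid l2U rV'.
Qed.

(* One extra move puts the missing edge out of reach: either [j0] gets matched
   (if [j0] is not [x] or [y]) or [i0] does, along an edge avoiding [j0]. *)
Lemma position_wins g (U V : {set 'I_t}) R B :
  2 < #|U| -> position g U V R B -> waiter_wins i0 j0 #|U| R B.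
Proof.
move=> U_gt2 pos; have [n cardU] : exists n, #|U| = n.+3.
  by exists (#|U| - 3); rewrite -addn3 subnK.
rewrite cardU.
have [avoid | ] := boolP ((i0 \notin U) || (j0 \notin V)).
  exact: position_wins_avoiding cardU pos avoid.
rewrite negb_or !negbK => /andP[i0U j0V].
have cardD l : l \in U -> #|U :\ l| = n.+2.
  by move=> lU; move: cardU; rewrite (cardsD1 l) lU => -[].
have [j0_xy | j0_xy] := boolP (j0 \in [set x; y]).
  have [r1 [r2 [r1V r2V r12]]] :
      exists r1 r2,
        [/\ r1 \in V :\: [set x; y], r2 \in V :\: [set x; y] & r1 != r2].
    by apply/card_gt1P; rewrite (card_spare pos) cardU.
  have ok r : r \in V :\: [set x; y] -> (i0, r) != (i0, j0).
    case/setDP=> _ r_xy; rewrite xpair_eqE eqxx.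
    by apply: contraNneq r_xy => ->.
  have wins r g' R' B' : position g' (U :\ i0) (V :\ r) R' B' ->
      waiter_wins i0 j0 n.+2 R' B'.
    move=> pos'.
    by apply: position_wins_avoiding (cardD _ i0U) pos' _; rewrite setD11.
  apply: (offer_adjacent_wins pos i0U i0U r1V r2V) (wins r1) (wins r2).
  - by rewrite eqxx.
  - by rewrite xpair_eqE eqxx.
  - exact: ok.
  - exact: ok.
have [l1 [l2 [l1U l2U l12]]] :
    exists l1 l2, [/\ l1 \in U :\ i0, l2 \in U :\ i0 & l1 != l2].
  by apply/card_gt1P; rewrite cardD.
have j0V' : j0 \in V :\: [set x; y] by rewrite in_setD j0_xy.
have ok l : l \in U :\ i0 -> (l, j0) != (i0, j0).
  by case/setD1P=> l_i0 _; rewrite xpair_eqE (negbTE l_i0).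
have wins l : l \in U :\ i0 -> forall g' R' B',
    position g' (U :\ l) (V :\ j0) R' B' -> waiter_wins i0 j0 n.+2 R' B'.
  case/setD1P=> _ lU g' R' B' pos'.
  by apply: position_wins_avoiding (cardD _ lU) pos' _; rewrite setD11 orbT.
have [l1U' l2U'] : l1 \in U /\ l2 \in U by case/setD1P: l1U; case/setD1P: l2U.
apply: (offer_adjacent_wins pos l1U' l2U' j0V' j0V') (wins _ l1U) (wins _ l2U).
- by rewrite eqxx orbT.
- by rewrite xpair_eqE eqxx andbT.
- exact: ok.
- exact: ok.
Qed.

End Position.

Lemma star_opening_wins t (i0 j0 a x x' y1 y2 : 'I_t) :
  3 < t -> a != i0 -> y1 != y2 ->
  x \notin [set y1; y2] -> x' \notin [set y1; y2] ->
  waiter_wins i0 j0 t [set (a, x)] [set (a, x')].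
Proof.
move=> t_gt3 a_i0 y12 x_y x'_y.
have card_a : #|[set~ a]| = t.-1 by rewrite cardsC1 card_ord.
have wins y y' : y \in [set y1; y2] -> y' \in [set y1; y2] ->
    waiter_wins i0 j0 t.-1 ((a, y) |: [set (a, x)]) ((a, y') |: [set (a, x')]).
  move=> yy y'y; have x_y' : x != y by apply: contraNneq x_y => ->.
  rewrite -card_a; apply: (position_wins i0 j0 x_y').
  - by rewrite card_a -ltnS prednK // (ltn_trans _ t_gt3).
  - apply: star_position; rewrite ?setU11 ?setU1r ?set11 //.
    by rewrite !subUset !sub1set !inE !eqxx.
have free y : y \in [set y1; y2] ->
    (a, y) \in Kminus_edges i0 j0 :\: ([set (a, x)] :|: [set (a, x')]).
  move=> yy; apply: board_edge; first by rewrite xpair_eqE (negbTE a_i0).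
  have y_x : y != x by apply: contraNneq x_y => <-.
  have y_x' : y != x' by apply: contraNneq x'_y => <-.
  by rewrite !inE !xpair_eqE eqxx /= negb_or y_x y_x'.
rewrite -[X in waiter_wins _ _ X](prednK (ltn_trans _ t_gt3)) //.
apply: (wins_offer (e1 := (a, y1)) (e2 := (a, y2))).
- by rewrite xpair_eqE eqxx.
- by rewrite free ?set21.
- by rewrite free ?set22.
- by apply: wins; rewrite ?set21 ?set22.
- by apply: wins; rewrite ?set21 ?set22.
Qed.

Theorem lemma3p3 (t : nat) (i0 j0 : 'I_t) :
  4 <= t -> waiter_wins i0 j0 t.+1 set0 set0.
Proof.
move=> t_ge4; have : 4 <= #|'I_t| by rewrite card_ord.
case/card_geqP=> -[|c0 [|c1 [|c2 [|c3 [|? ?]]]]] [] // uniq_c _ _.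
move: uniq_c; rewrite /= !inE !negb_or.
case/and4P=> /and3P[c01 c02 c03] /andP[c12 c13] c23 _.
have [a a_i0] : exists a, a != i0.
  case: (eqVneq c0 i0) => [<- | ?]; last by exists c0.
  by exists c1; rewrite eq_sym.
have free c : (a, c) \in Kminus_edges i0 j0 :\: (set0 :|: set0).
  by rewrite board_edge ?inE // xpair_eqE (negbTE a_i0).
have opening x x' : x \notin [set c2; c3] -> x' \notin [set c2; c3] ->
    waiter_wins i0 j0 t [set (a, x)] [set (a, x')].
  exact: star_opening_wins t_ge4 a_i0 c23.
have [c0_c23 c1_c23] : c0 \notin [set c2; c3] /\ c1 \notin [set c2; c3].
  by rewrite !inE !negb_or c02 c03 c12 c13.
apply: (wins_offer _ (free c0) (free c1)); rewrite ?xpair_eqE ?eqxx ?setU0 //.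
- exact: opening.
- exact: opening.
Qed.
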